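(* Let $n\geq1$, let $H$ be an irreducible subgroup of $SL(n,\mathbb{C})$ and let $u\in U_n(H)$. Then $\mathrm{Tr}(u)=0$ if $u\notin\langle \xi I_n\rangle$, and $\mathrm{Tr}(u)=n\xi^k$ if $u=\xi^kI_n$ with $k\in\mathbb{Z}/n$.
   Context: Let $\xi=e^{2\pi i/n}$; the center of $SL(n,\mathbb{C})$ is $\langle \xi I_n\rangle$. $\pi_n:SL(n,\mathbb{C})\to PSL(n,\mathbb{C})$ is the quotient map. A subgroup $H\le SL(n,\mathbb{C})$ is irreducible if no nonzero proper subspace of $\mathbb{C}^n$ is $H$-invariant. $U_n(H)=\{g\in SL(n,\mathbb{C}) : ghg^{-1}h^{-1}\in\langle\xi I_n\rangle \text{ for all } h\in H\}$, the preimage under $\pi_n$ of the centralizer of $\pi_n(H)$ in $PSL(n,\mathbb{C})$. *)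

(* The complex numbers are modelled by an arbitrary
   numClosedFieldType C (an algebraically closed field of characteristic 0,
   e.g. algC). *)
From HB Require Import structures.
From mathcomp Require Import all_boot all_order all_algebra.
Set Implicit Arguments. Unset Strict Implicit. Unset Printing Implicit Defensive.
Import Order.TTheory GRing.Theory Num.Theory.
Local Open Scope ring_scope.

Definition is_SL_subgroup (C : numClosedFieldType) (m : nat)
    (H : 'M[C]_m -> Prop) : Prop :=
  [/\ H 1%:M,
      (forall g h, H g -> H h -> H (g *m h)),
      (forall g, H g -> H (invmx g)) &
      (forall g, H g -> \det g = 1)].

Definition is_subspace (C : numClosedFieldType) (m : nat)
    (S : 'cV[C]_m -> Prop) : Prop :=
  [/\ S 0,
      (forall u v, S u -> S v -> S (u + v)) &
      (forall (a : C) v, S v -> S (a *: v))].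

Definition irreducible_mxgroup (C : numClosedFieldType) (m : nat)
    (H : 'M[C]_m -> Prop) : Prop :=
  forall S : 'cV[C]_m -> Prop, is_subspace S ->
    (forall h v, H h -> S v -> S (h *m v)) ->
    (forall v, S v -> v = 0) \/ (forall v, S v).

Definition U_set (C : numClosedFieldType) (m : nat) (xi : C)
    (H : 'M[C]_m -> Prop) (g : 'M[C]_m) : Prop :=
  \det g = 1 /\
  forall h, H h -> exists k : nat,
    g *m h *m invmx g *m invmx h = (xi ^+ k)%:M.

From HB Require Import structures.
From mathcomp Require Import all_boot all_order all_algebra.
Set Implicit Arguments.
Unset Strict Implicit.
Unset Printing Implicit Defensive.

Import Order.TTheory GRing.Theory Num.Theory.
Local Open Scope ring_scope.

(* If tr u != 0 then no commutator [u, h] can be a nontrivial scalar c, since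
   conjugating by h would give tr u = c tr u.  So u centralizes H, and by
   Schur's lemma (an eigenspace of u is H-invariant) u = a I; det u = 1 forces
   a^(n+1) = 1, i.e. a is a power of the primitive root xi. *)

Lemma mulmx_commutator_scalar (R : comUnitRingType) n (u h : 'M[R]_n) c :
  u \in unitmx -> h \in unitmx ->
  u *m h *m invmx u *m invmx h = c%:M -> u *m h = c *: (h *m u).
Proof.
move=> uU hU comm_uh.
have conj_h : u *m h *m invmx u = c *: h.
  by rewrite -mul_scalar_mx -comm_uh -!mulmxA mulVmx // mulmx1.
by rewrite scalemxAl -conj_h -mulmxA mulVmx // mulmx1.
Qed.

Lemma mxtrace_skew_commute (R : comUnitRingType) n (u h : 'M[R]_n) c :
  h \in unitmx -> u *m h = c *: (h *m u) -> \tr u = c * \tr u.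
Proof.
move=> hU uh_skew.
have tr_conj : \tr u = \tr (invmx h *m (u *m h)).
  by rewrite mxtrace_mulC -mulmxA mulmxV // mulmx1.
by rewrite {1}tr_conj uh_skew -scalemxAr mulmxA mulVmx // mul1mx mxtraceZ.
Qed.

Lemma mxtrace_eq0_skew_commute (F : fieldType) n (u h : 'M[F]_n) c :
  h \in unitmx -> u *m h = c *: (h *m u) -> c != 1 -> \tr u = 0.
Proof.
move=> hU /(mxtrace_skew_commute hU) tr_u c_neq1; apply/eqP.
have : (1 - c) * \tr u == 0 by rewrite mulrBl mul1r -tr_u subrr.
by rewrite mulf_eq0 subr_eq0 eq_sym (negbTE c_neq1).
Qed.

(* Eigenvalues in mxalgebra act on row vectors, hence the transposition. *)
Lemma mxeigenvector_col (F : closedFieldType) n (u : 'M[F]_n.+1) :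
  exists a, exists2 v : 'cV_n.+1, v != 0 & u *m v = a *: v.
Proof.
have [a] : exists a, root (char_poly u^T) a.
  by apply/closed_rootP; rewrite size_char_poly.
rewrite -eigenvalue_root_char => /eigenvalueP [w wu_aw w_neq0].
exists a, w^T; first by rewrite trmx_eq0.
by rewrite -[u]trmxK -trmx_mul wu_aw linearZ.
Qed.

Lemma scalar_mx_eigen_all (R : comNzRingType) n (u : 'M[R]_n) a :
  (forall v : 'cV_n, u *m v = a *: v) -> u = a%:M.
Proof.
move=> eigen_all; apply/matrixP => i j.
have /matrixP /(_ i 0) := eigen_all (delta_mx j 0).
by rewrite -colE !mxE eqxx andbT mulr_natr => ->.
Qed.

Lemma eigenspace_is_subspace (C : numClosedFieldType) n (u : 'M[C]_n) a :
  is_subspace (fun v => u *m v = a *: v).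
Proof.
split=> [|v w uv uw|b v uv].
- by rewrite mulmx0 scaler0.
- by rewrite mulmxDr uv uw scalerDr.
- by rewrite -scalemxAr uv !scalerA mulrC.
Qed.

Lemma irreducible_centralizer_scalar (C : numClosedFieldType) n
    (H : 'M[C]_n.+1 -> Prop) (u : 'M[C]_n.+1) :
  irreducible_mxgroup H -> (forall h, H h -> u *m h = h *m u) ->
  exists a, u = a%:M.
Proof.
move=> irrH cent_u; have [a [v v_neq0 uv]] := mxeigenvector_col u.
exists a; apply: scalar_mx_eigen_all.
have invariant h (w : 'cV_n.+1) :
    H h -> u *m w = a *: w -> u *m (h *m w) = a *: (h *m w).
  by move=> Hh uw; rewrite mulmxA cent_u // -mulmxA uw scalemxAr.
case: (irrH _ (eigenspace_is_subspace u a) invariant) => [eigen0|//].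
by rewrite (eigen0 v uv) eqxx in v_neq0.
Qed.

Lemma scalar_mx_det1_prim_root (F : fieldType) n (xi a : F) :
  n.+1.-primitive_root xi -> \det (a%:M : 'M[F]_n.+1) = 1 ->
  exists k : nat, a = xi ^+ k.
Proof.
rewrite det_scalar => xi_prim /(prim_rootP xi_prim) [k ->].
by exists k.
Qed.

Theorem mainTheorem3 (C : numClosedFieldType) (n : nat) (xi : C)
    (Hxi : (n.+1).-primitive_root xi)
    (H : 'M[C]_n.+1 -> Prop)
    (HSL : is_SL_subgroup H) (Hirr : irreducible_mxgroup H)
    (u : 'M[C]_n.+1) (Hu : U_set xi H u) :
  ((~ exists k : nat, u = (xi ^+ k)%:M) -> \tr u = 0) /\
  (forall k : nat, u = (xi ^+ k)%:M -> \tr u = (n.+1)%:R * xi ^+ k).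
Proof.
case: HSL => _ _ _ detH; case: Hu => det_u comm_u.
have unit_det1 (g : 'M[C]_n.+1) : \det g = 1 -> g \in unitmx.
  by move=> det_g; rewrite unitmxE det_g unitr1.
split=> [not_scalar | k ->]; last by rewrite mxtrace_scalar mulr_natl.
have [//|tr_neq0] := eqVneq (\tr u) 0; exfalso; apply: not_scalar.
have cent_u h : H h -> u *m h = h *m u.
  move=> Hh; have hU := unit_det1 h (detH h Hh).
  have [k /(mulmx_commutator_scalar (unit_det1 u det_u) hU) uh] := comm_u h Hh.
  have [c1|c_neq1] := eqVneq (xi ^+ k) 1; first by rewrite uh c1 scale1r.
  by rewrite (mxtrace_eq0_skew_commute hU uh c_neq1) eqxx in tr_neq0.
have [a u_a] := irreducible_centralizer_scalar Hirr cent_u.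
have [k a_k] : exists k : nat, a = xi ^+ k.
  by apply: scalar_mx_det1_prim_root Hxi _; rewrite -u_a.
by exists k; rewrite u_a a_k.
Qed.
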